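(* Let $N,k$ be positive integers and $\lambda$ a partition with $l(\lambda)\le N$. Then: (1) $c'_\lambda(q,t)$ is nonzero at $q^kt^N=1$. (2) $c_\lambda(q,t)$ is zero at $q^kt^N=1$ if and only if $l(\lambda^t)>k$ and $l(\overline{\lambda}^t)\le k$. Moreover, in that case exactly one of the factors $1-q^{a(s)}t^{l(s)+1}$, $s\in\lambda$, becomes zero at $q^kt^N=1$ (the order of vanishing is $1$).
   Context: Partitions $\lambda=(\lambda_1\ge\lambda_2\ge\cdots)$ are identified with Young diagrams $\{(i,j): i\ge1,\ 1\le j\le\lambda_i\}$; $\lambda^t$ is the transpose partition, $l(\lambda)$ the number of nonzero parts (so $l(\lambda^t)=\lambda_1$), $|\lambda|=\sum_i\lambda_i$. For a box $s=(i,j)\in\lambda$: arm $a(s)=\lambda_i-j$, leg $l(s)=\lambda^t_j-i$. Set $c_\lambda(q,t)=\prod_{s\in\lambda}(1-q^{a(s)}t^{l(s)+1})$ and $c'_\lambda(q,t)=\prod_{s\in\lambda}(1-q^{a(s)+1}t^{l(s)})$. For a partition $\lambda$ with $l(\lambda)\le N$, $\overline{\lambda}$ denotes the partition $(\lambda_1-\lambda_N,\lambda_2-\lambda_N,\dots,\lambda_{N-1}-\lambda_N)$ obtained by removing all columns of height $N$ (so $l(\overline\lambda)<N$). Specialization at $q^kt^N=1$: let $m=\gcd(k,N)$, fix a primitive $m$-th root of unity $\omega$ and $\omega_1\in\mathbb C$ with $\omega_1^{N/m}=\omega$. Let $v$ be an indeterminate and consider the ring homomorphism $\mathbb Z[q^{\pm1},t^{\pm1}]\to\mathbb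 C(v)$, $q\mapsto v^N$, $t\mapsto v^{-k}\omega_1$. An element is said to be zero (resp. nonzero) at $q^kt^N=1$ if its image under this homomorphism is zero (resp. nonzero). *)

From HB Require Import structures.
From mathcomp Require Import all_boot all_order all_algebra all_field.
Set Implicit Arguments. Unset Strict Implicit. Unset Printing Implicit Defensive.
Import Order.TTheory GRing.Theory Num.Theory.

Definition is_partition (s : seq nat) : bool :=
  sorted geq s && all (fun x => 0 < x) s.

Definition plen (s : seq nat) : nat := size s.

(* lambda_i, 1-indexed (0 if i > l(lambda)) *)
Definition part (s : seq nat) (i : nat) : nat := nth 0 s i.-1.

Definition conj_part (s : seq nat) (j : nat) : nat := count (fun x => j <= x) s.

Definition transp (s : seq nat) : seq nat :=
  [seq conj_part s j | j <- iota 1 (head 0 s)].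

Definition boxes (s : seq nat) : seq (nat * nat) :=
  [seq (i, j) | i <- iota 1 (size s), j <- iota 1 (part s i)].

Definition arm (s : seq nat) (b : nat * nat) : nat := part s b.1 - b.2.
Definition leg (s : seq nat) (b : nat * nat) : nat := conj_part s b.2 - b.1.

Definition c_lam (R : comNzRingType) (q t : R) (s : seq nat) : R :=
  (\prod_(b <- boxes s) (1 - q ^+ arm s b * t ^+ (leg s b).+1))%R.
Definition c'_lam (R : comNzRingType) (q t : R) (s : seq nat) : R :=
  (\prod_(b <- boxes s) (1 - q ^+ (arm s b).+1 * t ^+ leg s b))%R.

Definition pbar (N : nat) (s : seq nat) : seq nat :=
  [seq x <- [seq part s i - part s N | i <- iota 1 N.-1] | 0 < x].

(* The target field C(v) of the specialization, with C = algC. *)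
Definition Cv := {fraction {poly algC}}.
Definition vv : Cv := tofrac ('X : {poly algC}).
Definition cst (c : algC) : Cv := tofrac (c%:P).
(* images of q and t under q |-> v^N, t |-> v^{-k} omega_1 *)
Definition q_img (N : nat) : Cv := (vv ^+ N)%R.
Definition t_img (k : nat) (w1 : algC) : Cv := ((vv ^+ k)^-1 * cst w1)%R.

From HB Require Import structures.
From mathcomp Require Import all_boot all_order all_algebra all_field.
From mathcomp Require Import zify.
Set Implicit Arguments. Unset Strict Implicit.
Import GRing.Theory.

(* Both c_lambda and c'_lambda are products of factors 1 - q^a t^b over the
   boxes of lambda, so everything reduces to deciding when a single factor
   vanishes under q |-> v^N, t |-> v^{-k} w1.
   - Specialization: 1 - q^a t^b vanishes iff N a = k b and w1^b = 1
     (compare the monomials v^{Na} w1^b and v^{kb} in C(v)).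
   - Roots of unity: since w1^{N/m} is a primitive m-th root of unity,
     m = gcd(k,N), these two conditions force N | b.  Hence for b <= N the
     factor vanishes iff (a,b) = (0,0) or (a,b) = (k,N).
   - Young diagrams: every leg is < N when l(lambda) <= N, so no factor
     of c'_lambda vanishes; a box with l(s)+1 = N and a(s) = k must be the box
     (1, lambda_1 - k), and it lies in lambda with leg N-1 exactly when
     k < lambda_1 and lambda_1 - k <= lambda_N.
   The theorem follows, using l(lambda^t) = lambda_1 and
   l(overline(lambda)^t) = lambda_1 - lambda_N. *)

Section Specialization.
Local Open Scope ring_scope.

Lemma scaleXn_eqXn (R : nzRingType) (n m : nat) (c : R) : c != 0 ->
  (c *: 'X^n == 'X^m :> {poly R}) = (n == m)%N && (c == 1).
Proof.
move=> c_neq0; apply/eqP/andP => [E | [/eqP -> /eqP ->]]; last by rewrite scale1r.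
have := congr1 (fun p : {poly R} => p`_n) E.
rewrite /= coefZ !coefXn eqxx mulr1 => c_eq.
suff nm : (n == m)%N by rewrite c_eq nm.
by case: eqP c_eq => // _ c_eq0; rewrite c_eq0 eqxx in c_neq0.
Qed.

Lemma specialized_monomial (N k a b : nat) (w1 : algC) :
  q_img N ^+ a * t_img k w1 ^+ b =
  tofrac ('X^(N * a) * (w1 ^+ b)%:P) / tofrac ('X^(k * b)).
Proof.
rewrite /q_img /t_img /vv /cst exprMn -!exprM exprVn tofracM !tofracXn.
by rewrite rmorphXn tofracXn -exprM mulrA mulrAC.
Qed.

Lemma specialized_factor_eq0 (N k a b : nat) (w1 : algC) : w1 != 0 ->
  (1 - q_img N ^+ a * t_img k w1 ^+ b == 0) = (N * a == k * b)%N && (w1 ^+ b == 1).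
Proof.
move=> w1_neq0; rewrite specialized_monomial subr_eq0 eq_sym.
have den_neq0 : tofrac ('X^(k * b) : {poly algC}) != 0.
  by rewrite tofrac_eq0 monic_neq0 ?monicXn.
rewrite -[X in _ == X](divff den_neq0) (can2_eq (divfK den_neq0) (mulfK den_neq0)).
rewrite divfK // tofrac_eq mulrC mul_polyC scaleXn_eqXn ?expf_neq0 //.
Qed.

End Specialization.

Section RootsOfUnity.
Variables (R : nzRingType) (N k : nat) (w w1 : R).
Hypothesis k_gt0 : 0 < k.
Hypothesis w_prim : primitive_root_of_unity (gcdn k N) w.
Hypothesis w1_root : (w1 ^+ (N %/ gcdn k N) = w)%R.

Lemma root_expN : (w1 ^+ N = 1)%R.
Proof.
have eN : N = N %/ gcdn k N * gcdn k N by rewrite divnK // dvdn_gcdr.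
by rewrite eN exprM w1_root prim_expr_order.
Qed.

(* If v^{Na} w1^b = v^{kb} then N divides b: writing N = N'm, k = k'm with
   N', k' coprime, N' divides b = N' j, and w^j = 1 forces m | j. *)
Lemma root_exponent_dvd (a b : nat) :
  N * a = k * b -> (w1 ^+ b = 1)%R -> N %| b.
Proof.
move=> Eab w1b; pose m := gcdn k N.
have m_gt0 : 0 < m by rewrite gcdn_gt0 k_gt0.
have eN : N = N %/ m * m by rewrite divnK // dvdn_gcdr.
have ek : k = k %/ m * m by rewrite divnK // dvdn_gcdl.
pose N' := N %/ m; pose k' := k %/ m; rewrite -/N' in eN; rewrite -/k' in ek.
have coNk : coprime N' k'.
  rewrite /coprime gcdnC -(eqn_pmul2r m_gt0) muln_gcdl -ek -eN mul1n.
  exact: eqxx.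
have E' : N' * a = k' * b.
  by apply/eqP; rewrite -(eqn_pmul2r m_gt0) mulnAC -eN mulnAC -ek; apply/eqP.
have : N' %| k' * b by rewrite -E' dvdn_mulr.
rewrite (Gauss_dvdr _ coNk) => /dvdnP [j ej].
move: w1b; rewrite ej mulnC exprM w1_root => /eqP.
rewrite -(prim_order_dvd w_prim) -/m => /dvdnP [i ->].
by rewrite {1}eN mulnCA dvdn_mull.
Qed.

End RootsOfUnity.

Lemma specialized_factor_eq0_small (N k a b : nat) (w w1 : algC) :
  0 < N -> 0 < k ->
  primitive_root_of_unity (gcdn k N) w -> (w1 ^+ (N %/ gcdn k N) = w)%R -> b <= N ->
  (1 - q_img N ^+ a * t_img k w1 ^+ b == 0)%R =
  (a == 0) && (b == 0) || (a == k) && (b == N).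
Proof.
move=> N_gt0 k_gt0 w_prim w1_root bN.
have w1N := root_expN w_prim w1_root.
have w1_neq0 : (w1 != 0)%R.
  by apply: contra_eq_neq w1N => ->; rewrite expr0n gtn_eqF // eq_sym oner_neq0.
rewrite specialized_factor_eq0 //; apply/andP/orP => [[/eqP Eab /eqP w1b] | ].
  have N_dvd_b := root_exponent_dvd k_gt0 w_prim w1_root Eab w1b.
  have [b0 | b_gt0] := posnP b.
    by left; rewrite andbT; apply/eqP; nia.
  have bN' : b = N by have := dvdn_leq b_gt0 N_dvd_b; lia.
  by right; rewrite bN' eqxx andbT; apply/eqP; nia.
by case=> /andP [/eqP -> /eqP ->]; rewrite ?muln0 ?expr0 // mulnC w1N.
Qed.

Lemma mem_boxesE (s : seq nat) (i j : nat) :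
  ((i, j) \in boxes s) = (0 < i <= size s) && (0 < j <= part s i).
Proof.
apply/allpairsPdep/andP => [[x [y [hx hy [-> ->]]]] | [hi hj]].
  by move: hx hy; rewrite !mem_iota; lia.
by exists i, j; rewrite !mem_iota; split=> //; lia.
Qed.

Lemma uniq_boxes (s : seq nat) : uniq (boxes s).
Proof.
apply: allpairs_uniq_dep; first exact: iota_uniq.
  by move=> i _; exact: iota_uniq.
by move=> [a b] [c d] _ _ /= [-> ->].
Qed.

Lemma plen_transp (t : seq nat) : plen (transp t) = head 0 t.
Proof. by rewrite /plen /transp size_map size_iota. Qed.

Lemma leg_lt (N : nat) (s : seq nat) (b : nat * nat) :
  b \in boxes s -> size s <= N -> leg s b < N.
Proof.
case: b => i j; rewrite mem_boxesE /leg /= => /andP [/andP [i_gt0 i_le] _] sN.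
have := count_size (fun x => j <= x) s; rewrite -/(conj_part s j); lia.
Qed.

Lemma corner_in_boxes (s : seq nat) (k : nat) :
  k < part s 1 -> (1, part s 1 - k) \in boxes s.
Proof.
move=> k_lt; rewrite mem_boxesE.
have : 0 < size s by case: s k_lt.
move: k_lt; rewrite /part /=; lia.
Qed.

Section YoungDiagram.
Variable s : seq nat.
Hypothesis s_part : is_partition s.

Lemma part_le (i i' : nat) : i <= i' -> part s i' <= part s i.
Proof.
move=> ii'; rewrite /part.
have [lt_i's | ge_i's] := ltnP i'.-1 (size s); last by rewrite nth_default.
have geq_trans : transitive geq by move=> x y z /= h1 h2; exact: leq_trans h2 h1.
apply: (sorted_leq_nth geq_trans (fun x => leqnn x) 0 (proj1 (andP s_part))).
all: rewrite ?inE; lia.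
Qed.

Lemma conj_part_ge (i j : nat) : (i, j) \in boxes s -> i <= conj_part s j.
Proof.
rewrite mem_boxesE => /andP [/andP [_ i_le] /andP [_ j_le]].
rewrite /conj_part -(cat_take_drop i s) count_cat.
suff -> : count (fun x => j <= x) (take i s) = i by exact: leq_addr.
have size_take_i := size_takel i_le.
apply/eqP; rewrite -{2}size_take_i -all_count; apply/(all_nthP 0) => idx.
rewrite size_take_i => idx_lt; rewrite nth_take //.
by apply: (leq_trans j_le); rewrite -[nth _ _ _]/(part s idx.+1) part_le.
Qed.

Lemma conj_part_eqN (N j : nat) : 0 < N -> size s <= N -> 0 < j ->
  (conj_part s j == N) = (j <= part s N).
Proof.
move=> N_gt0 sN j_gt0; rewrite /conj_part /part.
apply/eqP/idP => [conj_N | j_le].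
  have size_N : size s = N by have := count_size (fun x => j <= x) s; lia.
  have : all (fun x => j <= x) s by rewrite all_count conj_N size_N.
  by move/allP; apply; apply: mem_nth; rewrite size_N ltn_predL.
have size_N : size s = N.
  apply/eqP; rewrite eqn_leq sN /=; apply: contraLR j_le; rewrite -ltnNge => lt_sN.
  by rewrite nth_default -?ltnNge //; lia.
rewrite -size_N; apply/eqP; rewrite -all_count; apply/(all_nthP 0) => idx idx_lt.
apply: (leq_trans j_le); rewrite -[nth _ _ idx]/(part s idx.+1) part_le //; lia.
Qed.

Lemma hook_kN_box (N k : nat) (b : nat * nat) :
  0 < N -> size s <= N -> b \in boxes s ->
  (arm s b == k) && ((leg s b).+1 == N) =
  (b == (1, part s 1 - k)) && (k < part s 1) && (part s 1 - k <= part s N).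
Proof.
case: b => i j N_gt0 sN hb; have i_le_conj := conj_part_ge hb.
move: hb; rewrite mem_boxesE /arm /leg /= => /andP [/andP [i_gt0 _] /andP [j_gt0 j_le]].
have conj_le := count_size (fun x => j <= x) s; rewrite -/(conj_part s j) in conj_le.
have row_le_first : part s i <= part s 1 by rewrite part_le.
have conj_N := conj_part_eqN N_gt0 sN.
apply/andP/andP => [[/eqP arm_k /eqP leg_N] | [/andP [/eqP [ei ej] k_lt] kN]].
  have i1 : i = 1 by lia.
  have : j <= part s N by rewrite -conj_N //; apply/eqP; lia.
  subst i; rewrite xpair_eqE eqxx /=.
  by split; [apply/andP; split; [apply/eqP|] |]; lia.
subst i j; have : conj_part s (part s 1 - k) = N by apply/eqP; rewrite conj_N.
by split; apply/eqP; lia.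
Qed.

Lemma head_pbar (N : nat) : head 0 (pbar N s) = part s 1 - part s N.
Proof.
rewrite /pbar; case: N => [|[|n]] /=; rewrite ?subnn //.
case: ifP => // /negbT; rewrite lt0n negbK => /eqP top0; rewrite top0.
rewrite (@eq_in_filter _ _ pred0) ?filter_pred0 //.
move=> x /mapP [i /[!mem_iota] /andP [i_ge _] ->] /=.
by have := @part_le 1 i (ltnW i_ge); lia.
Qed.
End YoungDiagram.

Theorem lemma2p3 (N k : nat) (s : seq nat) (w w1 : algC) :
  0 < N -> 0 < k -> is_partition s -> plen s <= N ->
  primitive_root_of_unity (gcdn k N) w -> (w1 ^+ (N %/ gcdn k N) = w)%R ->
  (* (1) *)
  (c'_lam (q_img N) (t_img k w1) s != 0)%R /\
  (* (2) *)
  ((c_lam (q_img N) (t_img k w1) s == 0)%R =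
     (k < plen (transp s)) && (plen (transp (pbar N s)) <= k)) /\
  ((c_lam (q_img N) (t_img k w1) s == 0)%R ->
     count (fun b => (1 - q_img N ^+ arm s b * t_img k w1 ^+ (leg s b).+1 == 0)%R)
       (boxes s) = 1).
Proof.
move=> N_gt0 k_gt0 s_part sN w_prim w1_root.
have factor_eq0 := specialized_factor_eq0_small _ N_gt0 k_gt0 w_prim w1_root.
set x := (1, part s 1 - k).
set C := (k < part s 1) && (part s 1 - k <= part s N).
have c_factor_eq0 : {in boxes s, forall b,
    (1 - q_img N ^+ arm s b * t_img k w1 ^+ (leg s b).+1 == 0)%R = (b == x) && C}.
  move=> b hb; rewrite factor_eq0 ?leg_lt // andbF /= andbA.
  exact: hook_kN_box.
have c_eq0 : (c_lam (q_img N) (t_img k w1) s == 0)%R = C.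
  rewrite /c_lam prodf_seq_eq0 (eq_in_has c_factor_eq0).
  case C_val: C; last by apply/hasP => -[b _ /andP []].
  by apply/hasP; exists x; rewrite ?eqxx ?corner_in_boxes //; case/andP: C_val.
split; [|split].
- rewrite /c'_lam prodf_seq_neq0; apply/allP => b hb /=.
  by rewrite factor_eq0 ?(ltnW (leg_lt hb sN)) // (ltn_eqF (leg_lt hb sN)) !andbF.
- rewrite c_eq0 !plen_transp head_pbar // -nth0.
  have := @part_le s s_part 1 N N_gt0; rewrite /C /part /=.
  by move=> h; apply/andP/andP => -[h1 h2]; split; lia.
- rewrite c_eq0 => C_true.
  rewrite (eq_in_count c_factor_eq0) (@eq_count _ _ (pred1 x)).
    by rewrite count_uniq_mem ?uniq_boxes ?corner_in_boxes //; case/andP: C_true.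
  by move=> b /=; rewrite C_true andbT.
Qed.
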